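(* (i) If $f(z)=z+a_2z^2+\dots+a_dz^d$ is univalent in the unit disk $\mathbb D$ and $a_d=1/d$, then $f'$ is self-dual in $\Pi_{d-1}$. (ii) If $f(z)=z+\frac{a_1}{z}+\dots+\frac{a_d}{z^d}$ is univalent in $\Delta=\widehat{\mathbb C}\setminus\overline{\mathbb D}$ and $a_d=-1/d$, then the polynomial $z\mapsto f'(1/z)$ is self-dual in $\Pi_{d+1}$.
   Context: $\Pi_k$ denotes the space of complex polynomials of degree $\le k$. For $p\in\Pi_k$ define $p^*(z)=z^k\,\overline{p(1/\bar z)}$; $p$ is self-dual in $\Pi_k$ if $p^*=p$. *)

From HB Require Import structures.
From mathcomp Require Import all_boot all_order all_algebra.
From mathcomp Require Import complex.
From mathcomp Require Import reals.
Set Implicit Arguments. Unset Strict Implicit. Unset Printing Implicit Defensive.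
Import Order.TTheory GRing.Theory Num.Theory.
Local Open Scope ring_scope.

Definition in_Pi (R : realType) (k : nat) (p : {poly R[i]}) : bool :=
  (size p <= k.+1)%N.

(* p is self-dual in Pi_k: p \in Pi_k and p^*(z) := z^k * conj(p(1/conj z)) = p(z)
   (as functions; p^* is defined for z <> 0, which determines the polynomial). *)
Definition selfdual (R : realType) (k : nat) (p : {poly R[i]}) : Prop :=
  in_Pi k p /\
  forall z : R[i], z != 0 -> z ^+ k * (p.[(z^*)^-1])^* = p.[z].

(* open unit disk D and exterior Delta (finite part) *)
Definition unit_disk (R : realType) : pred R[i] := [pred z | `|z| < 1].
Definition ext_disk (R : realType) : pred R[i] := [pred z | 1 < `|z|].

Definition laurent_f (R : realType) (d : nat) (a : nat -> R[i]) (z : R[i]) : R[i] :=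
  z + \sum_(1 <= k < d.+1) a k / z ^+ k.
Definition laurent_df (R : realType) (d : nat) (a : nat -> R[i]) (z : R[i]) : R[i] :=
  1 - \sum_(1 <= k < d.+1) (k%:R * a k) / z ^+ k.+1.

(* Both parts reduce to one statement: a monic polynomial P with P(0) = 1 all
   of whose roots satisfy |c| >= 1 is self-dual.  Indeed the product of the
   roots has modulus |P(0)| = 1, so every root lies on the unit circle, where
   conj(1/conj z - c) = -conj(c) (z - c) / z.  In (i), P = f' is monic since
   d a_d = 1, and a root c of f' in D would be a critical point of f; in (ii),
   P(z) = f'(1/z) = 1 - sum k a_k z^(k+1) is monic since -d a_d = 1, and a root c
   with |c| < 1 makes 1/c a critical point of f in Delta.  A rational function
   A/B is never injective near a critical point z0: for small eps the equation
   A = (A(z0)/B(z0) + eps) B has two roots close to z0, because the product of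
   their distances to z0 is O(eps) while the sum of the inverse distances is
   B'(z0)/B(z0); the two roots are distinct since the Wronskian A'B - AB' has
   no other zero near z0. *)

From HB Require Import structures.
From mathcomp Require Import all_boot all_order all_algebra.
From mathcomp Require Import complex reals ring.
Import Order.TTheory GRing.Theory Num.Theory.
Local Open Scope ring_scope.

Lemma poly_eq_on_nonzero {R : numDomainType} (p q : {poly R}) :
  (forall z, z != 0 -> p.[z] = q.[z]) -> p = q.
Proof.
move=> pq; apply/eqP; rewrite -subr_eq0; apply: contraT => pq_neq0.
pose s := [seq i.+1%:R : R | i <- iota 0 (size (p - q))].
have s_roots : all (root (p - q)) s.
  by apply/allP => _ /mapP[i _ ->]; rewrite /root !hornerE pq ?subrr ?pnatr_eq0.
have s_uniq : uniq s.
  by rewrite map_inj_uniq ?iota_uniq // => i j /eqP; rewrite eqr_nat => /eqP [].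
by have := max_poly_roots pq_neq0 s_roots s_uniq; rewrite size_map size_iota ltnn.
Qed.

Lemma size_monic_top_coef {R : nzRingType} (p : {poly R}) n :
  (size p <= n.+1)%N -> p`_n = 1 -> size p = n.+1 /\ p \is monic.
Proof.
move=> size_le pn; have size_p : size p = n.+1.
  apply/eqP; rewrite eqn_leq size_le ltnNge; apply/negP => /leq_sizeP/(_ n (leqnn n)).
  by rewrite pn => /eqP; rewrite oner_eq0.
by rewrite monicE lead_coefE size_p pn.
Qed.

Lemma real_argmin_seq {R : numDomainType} {T : eqType} (h : T -> R) {s : seq T} :
  s != [::] -> {in s, forall x, h x \is Num.real} ->
  exists2 x, x \in s & {in s, forall y, h x <= h y}.
Proof.
elim: s => [//|a s IHs] _ hR.
have hRa : h a \is Num.real by rewrite hR ?mem_head.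
have [->|s_nil] := eqVneq s [::].
  by exists a; rewrite ?mem_head // => y; rewrite inE => /eqP ->.
have [|b bs hb] := IHs s_nil; first by move=> x xs; rewrite hR // inE xs orbT.
have hRb : h b \is Num.real by rewrite hR // inE bs orbT.
have [hab|hba] := real_leP hRa hRb.
  by exists a; rewrite ?mem_head // => y; rewrite inE => /predU1P[->//|/hb]; apply: le_trans.
exists b; rewrite ?inE ?bs ?orbT // => y; rewrite inE => /predU1P[->|/hb //].
exact: ltW.
Qed.

Lemma prodr_ge1_eq1 {R : numDomainType} {s : seq R} : {in s, forall x, 1 <= x} ->
  \prod_(x <- s) x = 1 -> {in s, forall x, x = 1}.
Proof.
elim: s => [//|a s IHs] ge1; rewrite big_cons => prod1.
have a_ge1 : 1 <= a by rewrite ge1 ?mem_head.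
have {}ge1 : {in s, forall x, 1 <= x} by move=> x xs; rewrite ge1 // inE xs orbT.
have prod_ge1 : 1 <= \prod_(x <- s) x.
  by rewrite big_seq; elim/big_ind: _ => // x y; apply: mulr_ege1.
have a1 : a = 1.
  apply/le_anti; rewrite a_ge1 andbT -prod1.
  by rewrite ler_peMr // (le_trans ler01).
move: prod1; rewrite a1 mul1r => /(IHs ge1) eq1 x.
by rewrite inE => /predU1P[->|/eq1].
Qed.

Section PolyFacts.
Context {F : fieldType}.

Lemma horner_deriv_prod_XsubC (s : seq F) x : x \notin s ->
  (\prod_(r <- s) ('X - r%:P))^`().[x] =
  (\prod_(r <- s) ('X - r%:P)).[x] * \sum_(r <- s) (x - r)^-1.
Proof.
elim: s => [|r s IHs]; first by rewrite !big_nil mulr0 -polyC1 derivC horner0.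
rewrite inE negb_or => /andP[xr /IHs {}IHs].
have xr0 : x - r != 0 by rewrite subr_eq0.
rewrite !big_cons derivM derivXsubC !hornerE IHs.
by move: (\prod_(j <- s) _).[x] (\sum_(j <- s) _) => p t; field.
Qed.

Lemma root_deriv_mulXsubC_sqr (q : {poly F}) x : root (q * ('X - x%:P) ^+ 2)^`() x.
Proof.
rewrite /root derivM deriv_exp derivXsubC mul1r.
rewrite !(hornerXsubC, horner_exp, hornerMn, hornerD, hornerM) subrr.
by rewrite !(expr0n, mulr0, mul0rn, addr0).
Qed.

End PolyFacts.

Lemma two_near_points {C : numFieldType} {rs : seq C} {z0 ka del : C} :
  (1 < size rs)%N -> 0 < del -> z0 \notin rs ->
  \sum_(r <- rs) (z0 - r)^-1 = ka ->
  \prod_(r <- rs) `|z0 - r| < (`|ka| + (size rs)%:R / del) ^- size rs ->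
  exists r1 r2 rest,
    [/\ perm_eq rs [:: r1, r2 & rest], `|z0 - r1| < del & `|z0 - r2| < del].
Proof.
move=> rs_gt1 del_gt0 z0_rs sum_ka prod_lt.
set n := size rs in rs_gt1 prod_lt; set M := `|ka| + n%:R / del.
have n_gt0 : (0 < n)%N by apply: ltnW.
have M_gt0 : 0 < M by rewrite ltr_wpDl ?divr_gt0 ?ltr0n.
have dist_gt0 : {in rs, forall r, 0 < `|z0 - r|}.
  by move=> r rs_r; rewrite normr_gt0 subr_eq0; apply: contraNneq z0_rs => ->.
have dist_real r : `|z0 - r| \is Num.real by apply: normr_real.
have rs_neq0 : rs != [::] by rewrite -size_eq0 -lt0n.
have [r1 r1_rs r1_min] :=
  real_argmin_seq (fun r => `|z0 - r|) rs_neq0 (fun r _ => dist_real r).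
set rest := rem r1 rs; have rs_perm : perm_eq rs (r1 :: rest) by apply: perm_to_rem.
have size_rest : size rest = n.-1 by rewrite size_rem.
have rest_neq0 : rest != [::] by rewrite -size_eq0 size_rest -lt0n -ltnS prednK.
have [r2 r2_rest r2_min] :=
  real_argmin_seq (fun r => `|z0 - r|) rest_neq0 (fun r _ => dist_real r).
have r2_rs : r2 \in rs by apply: mem_rem r2_rest.
set t1 := `|z0 - r1|; set t2 := `|z0 - r2|.
have [t1_gt0 t2_gt0] : 0 < t1 /\ 0 < t2 by rewrite !dist_gt0.
(* r1 and r2 are the nearest and the second nearest points: the product bound
   puts r1 within M^-1 of z0, and the sum identity then puts r2 within del. *)
have M_lt_t1V : M < t1^-1.
  have t1_nneg : t1 \is Num.nneg by rewrite nnegrE ltW.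
  have MV_nneg : M^-1 \is Num.nneg by rewrite nnegrE invr_ge0 ltW.
  rewrite -[M]invrK ltf_pV2 ?posrE ?invr_gt0 // -(ltr_pXn2r n_gt0) //.
  rewrite exprVn; apply: le_lt_trans prod_lt; rewrite -iter_mulr_1 /n -count_predT -big_const_seq.
  by rewrite big_seq [X in _ <= X]big_seq; apply: ler_prod => r rs_r; rewrite (ltW t1_gt0) r1_min.
have t1V_le : t1^-1 <= `|ka| + (n.-1)%:R * t2^-1.
  have -> : t1^-1 = `|ka - \sum_(r <- rest) (z0 - r)^-1|.
    by rewrite -sum_ka (perm_big _ rs_perm) big_cons addrK normfV.
  apply: le_trans (ler_normB _ _) _; rewrite lerD2l.
  apply: le_trans (ler_norm_sum _ _ _) _.
  rewrite -size_rest mulr_natl -iter_addr_0 -count_predT -big_const_seq big_seq.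
  rewrite [X in _ <= X]big_seq; apply: ler_sum => r rest_r.
  by rewrite normfV lef_pV2 ?posrE ?dist_gt0 ?r2_min // (mem_rem rest_r).
have t2_lt_del : t2 < del.
  have n_pos : 0 < n%:R :> C by rewrite ltr0n.
  rewrite -ltf_pV2 ?posrE // -(ltr_pM2l n_pos).
  have n_ge : (n.-1)%:R * t2^-1 <= n%:R * t2^-1.
    by apply: ler_wpM2r; [rewrite invr_ge0 ltW | rewrite ler_nat leq_pred].
  by rewrite -(ltrD2l `|ka|) (lt_le_trans M_lt_t1V (le_trans t1V_le _)) ?lerD2l.
exists r1, r2, (rem r2 rest); split.
- by apply: perm_trans rs_perm _; rewrite perm_cons; apply: perm_to_rem.
- by apply: le_lt_trans t2_lt_del; apply: r1_min.
- exact: t2_lt_del.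
Qed.

Section CriticalPoints.
Context {C : numClosedFieldType}.

Lemma isolated_roots (p : {poly C}) z0 d0 : p != 0 -> 0 < d0 ->
  exists2 del, 0 < del <= d0 & forall z, 0 < `|z - z0| < del -> ~~ root p z.
Proof.
move=> p_neq0 d0_gt0; have [cs p_eq] := closed_field_poly_normal p.
set s := d0 :: [seq `|c - z0| | c <- cs & c != z0].
have s_gt0 : {in s, forall x, 0 < x}.
  move=> x; rewrite inE => /predU1P[-> //|/mapP[c]].
  by rewrite mem_filter => /andP[cz _] ->; rewrite normr_gt0 subr_eq0.
have [del del_s del_min] :=
  @real_argmin_seq _ _ id s isT (fun x xs => gtr0_real (s_gt0 x xs)).
have del_gt0 : 0 < del by rewrite s_gt0.
exists del; first by rewrite del_gt0 del_min ?mem_head.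
move=> z /andP[z_gt0 z_lt]; apply: contraTN z_lt => pz.
rewrite -real_leNgt ?gtr0_real //.
apply: del_min; rewrite inE; apply/orP; right; apply/mapP; exists z => //.
have lp_neq0 : lead_coef p != 0 by rewrite lead_coef_eq0.
rewrite mem_filter -root_prod_XsubC -(rootZ _ _ lp_neq0) -p_eq pz andbT.
by rewrite -subr_eq0 -normr_gt0.
Qed.

Lemma two_roots_near (H : {poly C}) z0 del :
  (2 < size H)%N -> 0 < del -> ~~ root H z0 ->
  `|H.[z0]| < `|lead_coef H| *
    (`|H^`().[z0] / H.[z0]| + (size H).-1%:R / del) ^- (size H).-1 ->
  exists r1 r2 rest, [/\ H = lead_coef H *: \prod_(r <- [:: r1, r2 & rest]) ('X - r%:P),
    `|z0 - r1| < del & `|z0 - r2| < del].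
Proof.
move=> szH del_gt0 Hz0 small.
have L_neq0 : lead_coef H != 0 by rewrite lead_coef_eq0 -size_poly_gt0 (ltn_trans _ szH).
have [rs H_eq] := closed_field_poly_normal H.
have size_rs : size rs = (size H).-1 by rewrite [in RHS]H_eq size_scale // size_prod_XsubC.
have rs_gt1 : (1 < size rs)%N by rewrite size_rs -ltnS prednK // (ltn_trans _ szH).
have z0_rs : z0 \notin rs by rewrite -root_prod_XsubC -(rootZ _ _ L_neq0) -H_eq.
have sum_eq : \sum_(r <- rs) (z0 - r)^-1 = H^`().[z0] / H.[z0].
  apply: (mulfI Hz0); rewrite [RHS]mulrC divfK //.
  by rewrite H_eq derivZ !hornerZ horner_deriv_prod_XsubC // mulrA.
have prod_lt : \prod_(r <- rs) `|z0 - r| <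
    (`|H^`().[z0] / H.[z0]| + (size rs)%:R / del) ^- size rs.
  have normL_gt0 : 0 < `|lead_coef H| by rewrite normr_gt0.
  rewrite size_rs -(ltr_pM2l normL_gt0).
  apply: le_lt_trans small; rewrite [in X in _ <= X]H_eq hornerZ normrM horner_prod normr_prod.
  by under [X in _ <= _ * X]eq_bigr do rewrite hornerXsubC.
have [r1 [r2 [rest [rs_perm r1_near r2_near]]]] :=
  two_near_points rs_gt1 del_gt0 z0_rs sum_eq prod_lt.
by exists r1, r2, rest; rewrite [LHS]H_eq (perm_big _ rs_perm).
Qed.

Lemma critical_level_two_roots {A B : {poly C}} {z0 del : C} :
  (size B < size A)%N -> (2 < size A)%N -> B.[z0] != 0 -> 0 < del ->
  root (A^`() * B - A * B^`()) z0 ->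
  exists c r1 r2 rest, [/\ A - c *: B =
      lead_coef A *: \prod_(r <- [:: r1, r2 & rest]) ('X - r%:P),
    ~~ root (A - c *: B) z0, `|z0 - r1| < del & `|z0 - r2| < del].
Proof.
move=> szBA szA Bz0 del_gt0 Wz0.
set n := (size A).-1; set L := lead_coef A; set ka := B^`().[z0] / B.[z0].
set M := `|ka| + n%:R / del.
have L_neq0 : L != 0 by rewrite lead_coef_eq0 -size_poly_gt0 (ltn_trans _ szA).
have M_gt0 : 0 < M by rewrite ltr_wpDl ?divr_gt0 ?ltr0n // -ltnS prednK // (ltn_trans _ szA).
set eps := `|L| * M ^- n / (2 * `|B.[z0]|).
have eps_gt0 : 0 < eps by rewrite !(mulr_gt0, divr_gt0, invr_gt0, exprn_gt0, normr_gt0).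
set c := A.[z0] / B.[z0] + eps; set H := A - c *: B.
have szcB : (size (c *: B) < size A)%N by apply: leq_ltn_trans (size_scale_leq _ _) szBA.
have size_H : size H = size A by rewrite size_polyDl ?size_polyN.
have lead_H : lead_coef H = L by rewrite lead_coefDl ?size_polyN.
have Hz0 : H.[z0] = - (eps * B.[z0]) by rewrite /H hornerD hornerN hornerZ /c; field.
have H'z0 : H^`().[z0] = - (eps * B^`().[z0]).
  move: Wz0; rewrite /root /H derivB derivZ !(hornerD, hornerN, hornerM, hornerZ) subr_eq0 /c.
  by move=> /eqP W0; apply: (mulIf Bz0); rewrite mulrDl mulNr W0; field.
have eps_neq0 : eps != 0 by rewrite gt_eqF.
have Hz0_neq0 : H.[z0] != 0 by rewrite Hz0 oppr_eq0 mulf_neq0.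
have logder : H^`().[z0] / H.[z0] = ka by rewrite H'z0 Hz0 /ka; field; rewrite Bz0 eps_neq0.
have small : `|H.[z0]| < `|L| * M ^- n.
  have LM_gt0 : 0 < `|L| / M ^+ n by rewrite divr_gt0 ?normr_gt0 ?exprn_gt0.
  rewrite Hz0 normrN normrM gtr0_norm // /eps invfM mulrA mulfVK ?normr_eq0 //.
  by rewrite -[X in _ < X]mulr1 ltr_pM2l // invf_lt1 ?ltr1n.
have [r1 [r2 [rest [H_eq r1_near r2_near]]]] : exists r1 r2 rest,
    [/\ H = lead_coef H *: \prod_(r <- [:: r1, r2 & rest]) ('X - r%:P),
     `|z0 - r1| < del & `|z0 - r2| < del].
  by apply: two_roots_near; rewrite ?size_H ?lead_H ?logder.
by exists c, r1, r2, rest; rewrite -lead_H.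
Qed.

Lemma critical_point_not_injective {A B : {poly C}} {S : pred C} {z0 d0 : C} :
  0 < d0 -> (forall z, `|z - z0| < d0 -> (z \in S) && (B.[z] != 0)) ->
  (size B < size A)%N -> (2 < size A)%N ->
  A^`() * B - A * B^`() != 0 -> root (A^`() * B - A * B^`()) z0 ->
  ~ {in S &, injective (fun z => A.[z] / B.[z])}.
Proof.
move=> d0_gt0 near_S szBA szA W_neq0 Wz0 inj.
have [del /andP[del_gt0 del_le] W_isolated] := isolated_roots _ z0 _ W_neq0 d0_gt0.
have {}near_S z : `|z0 - z| < del -> (z \in S) && (B.[z] != 0).
  by move=> z_near; rewrite near_S // distrC (lt_le_trans z_near).
have /andP[_ Bz0] : (z0 \in S) && (B.[z0] != 0) by rewrite near_S // subrr normr0.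
have [c [r1 [r2 [rest [H_eq Hz0 r1_near r2_near]]]]] :=
  critical_level_two_roots szBA szA Bz0 del_gt0 Wz0.
set H := A - c *: B in H_eq Hz0.
have H_value r : `|z0 - r| < del -> root H r -> A.[r] / B.[r] = c.
  move=> /near_S /andP[_ Br]; rewrite /root /H hornerD hornerN hornerZ subr_eq0.
  by move=> /eqP ->; rewrite mulfK.
have [H_r1 H_r2] : root H r1 /\ root H r2.
  have L_neq0 : lead_coef A != 0 by rewrite lead_coef_eq0 -size_poly_gt0 (ltn_trans _ szA).
  by rewrite H_eq !(rootZ _ _ L_neq0) !root_prod_XsubC !inE !eqxx !orbT.
have near_in_S r : `|z0 - r| < del -> r \in S by move=> /near_S /andP[].
have r21 : r2 = r1 by apply: inj; rewrite /= ?near_in_S ?H_value.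
have H_sqr : H = (lead_coef A *: \prod_(r <- rest) ('X - r%:P)) * ('X - r1%:P) ^+ 2.
  by rewrite H_eq !big_cons r21 -scalerAl; congr (_ *: _); ring.
have W_eq : A^`() * B - A * B^`() = H^`() * B - H * B^`().
  by rewrite /H derivB derivZ -!mul_polyC; ring.
have W_r1 : root (A^`() * B - A * B^`()) r1.
  have /eqP H'_r1 : root H^`() r1 by rewrite H_sqr root_deriv_mulXsubC_sqr.
  by rewrite W_eq /root hornerD hornerN !hornerM (eqP H_r1) H'_r1 !mul0r subrr.
have : ~~ (0 < `|r1 - z0|).
  by apply: contraL W_r1 => r1_pos; apply: W_isolated; rewrite r1_pos distrC r1_near.
by rewrite normr_gt0 negbK subr_eq0 => /eqP r1_z0; move: Hz0; rewrite -r1_z0 H_r1.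
Qed.

Lemma poly_critical_point_not_injective {f : {poly C}} {S : pred C} {c d0 : C} :
  0 < d0 -> (forall z, `|z - c| < d0 -> z \in S) -> (2 < size f)%N ->
  root f^`() c -> ~ {in S &, injective (horner f)}.
Proof.
move=> d0_gt0 near_S size_f f'c inj.
have f'_neq0 : f^`() != 0.
  have lead_f : f`_(size f).-1 != 0.
    by rewrite -lead_coefE lead_coef_eq0 -size_poly_gt0 (ltn_trans _ size_f).
  have pred_size : (size f).-2.+1 = (size f).-1 by case: (size f) size_f => [|[]].
  apply: contraNneq lead_f => f'_eq0; have := coef_deriv f (size f).-2.
  rewrite f'_eq0 coef0 pred_size => /esym/eqP; rewrite mulrn_eq0 => /orP[|/eqP //].
  by case: (size f) size_f => [|[|[]]].
have W_eq : f^`() * 1%:P - f * (1%:P)^`() = f^`() by rewrite derivC mulr0 subr0 mulr1.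
have inj1 : {in S &, injective (fun z => f.[z] / (1%:P).[z])}.
  by move=> x y Sx Sy /=; rewrite !hornerC !divr1; apply: inj Sx Sy.
apply: (critical_point_not_injective (z0 := c) d0_gt0 _ _ size_f _ _ inj1).
- by move=> z z_near; rewrite near_S // hornerC oner_neq0.
- by rewrite size_polyC oner_neq0 (ltn_trans _ size_f).
- by rewrite W_eq.
- by rewrite W_eq.
Qed.

End CriticalPoints.

Section SelfReciprocal.
Context {C : numClosedFieldType}.

Lemma self_reciprocal_prod_XsubC (s : seq C) z : z != 0 -> {in s, forall c, `|c| = 1} ->
  z ^+ size s * (\prod_(c <- s) ((z^*)^-1 - c))^* =
  \prod_(c <- s) (- c^*) * \prod_(c <- s) (z - c).
Proof.
move=> z_neq0; elim: s => [|c s IHs] unit_s; first by rewrite !big_nil expr0 rmorph1 !mul1r.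
have unit_c : c^* * c = 1 by rewrite -normCKC unit_s ?mem_head ?expr1n.
have key : z * ((z^*)^-1 - c)^* = - c^* * (z - c).
  by rewrite rmorphB fmorphV /= conjCK mulrBr mulfV // -unit_c; ring.
rewrite !big_cons rmorphM exprS mulrACA key IHs => [|x xs]; last by rewrite unit_s // inE xs orbT.
by rewrite mulrACA.
Qed.

Lemma monic_self_reciprocal {P : {poly C}} {k : nat} : size P = k.+1 -> P \is monic ->
  P.[0] = 1 -> (forall c, root P c -> 1 <= `|c|) ->
  forall z, z != 0 -> z ^+ k * (P.[(z^*)^-1])^* = P.[z].
Proof.
move=> size_P /monicP lead_P P0 roots_ge1 z z_neq0.
have [rs P_eq] := closed_field_poly_normal P; rewrite lead_P scale1r in P_eq.
have size_rs : size rs = k by move: size_P; rewrite P_eq size_prod_XsubC => -[].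
have prod_rs : \prod_(c <- rs) (- c) = 1.
  by rewrite -[RHS]P0 P_eq horner_prod; apply: eq_bigr => c _; rewrite hornerXsubC sub0r.
have unit_rs : {in rs, forall c, `|c| = 1}.
  move=> c c_rs; apply: (prodr_ge1_eq1 (s := [seq `|c| | c <- rs])); last exact: map_f.
    by move=> _ /mapP[r r_rs ->]; rewrite roots_ge1 // P_eq root_prod_XsubC.
  by rewrite big_map -(eq_bigr _ (fun c _ => normrN c)) -normr_prod prod_rs normr1.
rewrite P_eq !horner_prod -size_rs.
under eq_bigr do rewrite hornerXsubC.
under [in RHS]eq_bigr do rewrite hornerXsubC.
rewrite self_reciprocal_prod_XsubC // [X in X * _](_ : _ = 1) ?mul1r //.
rewrite -[RHS]conjC1 -[in RHS]prod_rs rmorph_prod.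
by apply: eq_bigr => c _; rewrite rmorphN.
Qed.

End SelfReciprocal.

Section Laurent.
Context {R : realType}.
Implicit Types (d : nat) (a : nat -> R[i]).

Definition laurent_num d a : {poly R[i]} :=
  'X^(d.+1) + \sum_(1 <= k < d.+1) a k *: 'X^(d - k).

Definition laurent_df_inv d a : {poly R[i]} :=
  1 - \sum_(1 <= k < d.+1) (k%:R * a k) *: 'X^(k.+1).

Lemma size_laurent_num d a : size (laurent_num d a) = d.+2.
Proof.
rewrite size_polyDl size_polyXn // ltnS; apply/leq_sizeP => j lt_dj.
rewrite coef_sum big1 // => k _; rewrite coefZ coefXn gtn_eqF ?mulr0 //.
exact: leq_ltn_trans (leq_subr _ _) lt_dj.
Qed.

Lemma horner_laurent_num d a w : w != 0 -> (laurent_num d a).[w] = laurent_f d a w * w ^+ d.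
Proof.
move=> w_neq0; rewrite mulrC /laurent_num /laurent_f hornerD hornerXn horner_sum mulrDr exprSr.
congr (_ + _); rewrite mulr_sumr; apply: eq_big_nat => k /andP[_ k_le].
by rewrite hornerZ hornerXn exprB ?unitfE // mulrCA.
Qed.

Lemma horner_laurent_df_inv d a z : z != 0 ->
  (laurent_df_inv d a).[z] = laurent_df d a z^-1.
Proof.
move=> z_neq0; rewrite /laurent_df_inv /laurent_df !hornerE horner_sum; congr (_ - _).
by apply: eq_big_nat => k _; rewrite hornerZ hornerXn exprVn invrK.
Qed.

Lemma horner_derivXn_mulX m (w : R[i]) : ('X^m)^`().[w] * w = m%:R * w ^+ m.
Proof.
case: m => [|m]; first by rewrite derivXn hornerMn !mulr0n !mul0r.
by rewrite derivXn hornerMn hornerXn -mulr_natl -mulrA -exprSr.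
Qed.

Lemma laurent_num_wronskian d a w : w != 0 ->
  ((laurent_num d a)^`() * 'X^d - laurent_num d a * ('X^d)^`()).[w] =
  w ^+ (d + d) * laurent_df d a w.
Proof.
move=> w_neq0; apply: (mulIf w_neq0).
set S2 := \sum_(1 <= k < d.+1) a k / w ^+ k.
set S3 := \sum_(1 <= k < d.+1) k%:R * a k / w ^+ k.
have N_w : (laurent_num d a).[w] = (w + S2) * w ^+ d by rewrite horner_laurent_num.
have dN_w : (laurent_num d a)^`().[w] * w = d.+1%:R * w ^+ d.+1 + w ^+ d * (d%:R * S2 - S3).
  rewrite derivD raddf_sum hornerD horner_sum mulrDl horner_derivXn_mulX mulr_suml.
  rewrite /S2 /S3 mulr_sumr -sumrB mulr_sumr; congr (_ + _); apply: eq_big_nat => k /andP[_ k_le].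
  rewrite /= derivZ hornerZ -mulrA horner_derivXn_mulX natrB // exprB ?unitfE //.
  by field; rewrite expf_neq0.
have df_w : laurent_df d a w = 1 - S3 / w.
  rewrite /laurent_df /S3 mulr_suml; congr (_ - _).
  by apply: eq_big_nat => k _; rewrite exprSr invfM mulrA.
rewrite hornerD hornerN !hornerM N_w hornerXn mulrBl mulrAC dN_w -mulrA.
rewrite horner_derivXn_mulX df_w exprD exprS.
by field.
Qed.

Lemma coef_laurent_df_inv d a j : (laurent_df_inv d a)`_j =
  (j == 0%N)%:R - \sum_(1 <= k < d.+1) k%:R * a k * (j == k.+1)%:R.
Proof.
rewrite /laurent_df_inv coefB coef1 coef_sum; congr (_ - _).
by apply: eq_bigr => k _; rewrite coefZ coefXn.
Qed.

Lemma horner_laurent_df_inv0 d a : (laurent_df_inv d a).[0] = 1.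
Proof.
by rewrite horner_coef0 coef_laurent_df_inv big1 ?subr0 // => k _; rewrite mulr0.
Qed.

Lemma laurent_df_inv_monic {d a} : (1 <= d)%N -> a d = - d%:R^-1 ->
  size (laurent_df_inv d a) = d.+2 /\ laurent_df_inv d a \is monic.
Proof.
move=> d_ge1 a_d; apply: size_monic_top_coef.
  apply/leq_sizeP => j j_gt; rewrite coef_laurent_df_inv gtn_eqF 1?(leq_trans _ j_gt) //.
  rewrite big1_seq ?subr0 // => k; rewrite mem_index_iota => /andP[_ /andP[_ k_le]].
  by rewrite gtn_eqF ?mulr0 // (leq_ltn_trans k_le).
rewrite coef_laurent_df_inv big_nat_recr //= big1_seq ?add0r; last first.
  by move=> k; rewrite mem_index_iota => /andP[_ /andP[_ k_lt]]; rewrite eqSS gtn_eqF ?mulr0.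
by rewrite eqxx mulr1 a_d mulrN opprK divff // pnatr_eq0 -lt0n.
Qed.

Lemma univalent_deriv_roots (f : {poly R[i]}) (c : R[i]) : ~~ root f^`() 0 ->
  {in @unit_disk R &, injective (horner f)} -> root f^`() c -> 1 <= `|c|.
Proof.
move=> f'0 inj f'c; rewrite real_leNgt ?real1 ?normr_real //; apply/negP => c_lt1.
have size_f : (2 < size f)%N.
  rewrite ltnNge; apply: contra f'0 => size_le.
  have /size1_polyC f'_eq : (size f^`() <= 1)%N.
    apply/leq_sizeP => j j_ge1; rewrite coef_deriv nth_default ?mul0rn //.
    exact: leq_trans size_le _.
  by move: f'c; rewrite f'_eq /root !hornerC.
apply: (poly_critical_point_not_injective (d0 := 1 - `|c|) _ _ size_f f'c inj).
  by rewrite subr_gt0.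
move=> z z_near; rewrite inE /= -(subrK c z).
by apply: le_lt_trans (ler_normD _ _) _; rewrite -ltrBrDr.
Qed.

Lemma univalent_laurent_roots d a (c : R[i]) : (1 <= d)%N ->
  {in @ext_disk R &, injective (laurent_f d a)} -> root (laurent_df_inv d a) c -> 1 <= `|c|.
Proof.
move=> d_ge1 inj Qc; rewrite real_leNgt ?real1 ?normr_real //; apply/negP => c_lt1.
have c_neq0 : c != 0 by apply: contraTneq Qc => ->; rewrite /root horner_laurent_df_inv0 oner_eq0.
set w0 := c^-1; have w0_gt1 : 1 < `|w0| by rewrite normfV invf_gt1 ?normr_gt0.
have ext_neq0 z : z \in @ext_disk R -> z != 0.
  by rewrite inE /= => z_gt1; rewrite -normr_gt0 (lt_trans ltr01).
have X_near z : `|z - w0| < `|w0| - 1 -> (z \in @ext_disk R) && (('X^d).[z] != 0).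
  move=> z_near; have z_ext : z \in @ext_disk R.
    have tri : `|w0| <= `|z| + `|z - w0|.
      by rewrite distrC -[X in `|X|](subrK z w0) addrC ler_normD.
    by rewrite inE /= -(ltrD2r `|z - w0|); apply: lt_le_trans tri; rewrite -ltrBrDl.
  by rewrite z_ext hornerXn expf_neq0 ?ext_neq0.
have W_eq w : w != 0 -> ((laurent_num d a)^`() * 'X^d - laurent_num d a * ('X^d)^`()).[w] =
    w ^+ (d + d) * (laurent_df_inv d a).[w^-1].
  by move=> w_neq0; rewrite laurent_num_wronskian // horner_laurent_df_inv ?invrK ?invr_eq0.
have inj1 : {in @ext_disk R &, injective (fun z => (laurent_num d a).[z] / ('X^d).[z])}.
  move=> x y x_ext y_ext /=; rewrite !hornerXn !horner_laurent_num ?ext_neq0 //.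
  by rewrite !mulfK ?expf_neq0 ?ext_neq0 //; apply: inj.
apply: (critical_point_not_injective _ X_near _ _ _ _ inj1).
- by rewrite subr_gt0.
- by rewrite size_polyXn size_laurent_num.
- by rewrite size_laurent_num.
- apply/eqP => W_eq0; have := horner_laurent_df_inv0 d a.
  suff -> : laurent_df_inv d a = 0 by rewrite horner0 => /eqP; rewrite eq_sym oner_eq0.
  apply: poly_eq_on_nonzero => z z_neq0; apply/eqP.
  have := W_eq _ (invr_neq0 z_neq0); rewrite W_eq0 horner0 invrK horner0.
  by move/esym/eqP; rewrite mulf_eq0 expf_eq0 invr_eq0 (negPf z_neq0) andbF.
- by rewrite /root W_eq ?invr_neq0 // invrK (eqP Qc) mulr0.
Qed.

End Laurent.

Theorem lemma2p9 (R : realType) :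
  (* (i) *)
  (forall (d : nat) (f : {poly R[i]}),
      (1 <= d)%N ->
      (size f <= d.+1)%N -> f`_0 = 0 -> f`_1 = 1 ->
      f`_d = (d%:R)^-1 ->
      {in @unit_disk R &, injective (horner f)} ->
      selfdual d.-1 f^`())
  /\
  (* (ii) *)
  (forall (d : nat) (a : nat -> R[i]),
      (1 <= d)%N ->
      a d = - (d%:R)^-1 ->
      {in @ext_disk R &, injective (laurent_f d a)} ->
      forall P : {poly R[i]},
        (forall z : R[i], z != 0 -> P.[z] = laurent_df d a z^-1) ->
        selfdual d.+1 P).
Proof.
split.
- move=> d f d_ge1 size_f _ f1 f_d inj.
  have [size_f' monic_f'] : size f^`() = d.-1.+1 /\ f^`() \is monic.
    apply: size_monic_top_coef; last first.
      by rewrite coef_deriv prednK // f_d; field; rewrite pnatr_eq0 -lt0n.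
    apply/leq_sizeP => j; rewrite prednK // => d_le_j.
    by rewrite coef_deriv nth_default ?mul0rn // (leq_trans size_f).
  have f'0 : f^`().[0] = 1 by rewrite horner_coef0 coef_deriv f1.
  split; first by rewrite /in_Pi size_f'.
  apply: (monic_self_reciprocal size_f' monic_f' f'0) => c.
  by apply: univalent_deriv_roots inj; rewrite /root f'0 oner_neq0.
- move=> d a d_ge1 a_d inj P P_eq.
  have -> : P = laurent_df_inv d a.
    by apply: poly_eq_on_nonzero => z z_neq0; rewrite P_eq // horner_laurent_df_inv.
  have [size_Q monic_Q] := laurent_df_inv_monic d_ge1 a_d.
  split; first by rewrite /in_Pi size_Q.
  apply: (monic_self_reciprocal size_Q monic_Q (horner_laurent_df_inv0 d a)) => c.
  exact: univalent_laurent_roots.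
Qed.
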